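(* Let $\epsilon$ and $\epsilon'$ be two sign assignments on a poset $(S,\triangleleft)$. If $\mathrm H^1_{\rm CW}(\mathscr K(S,\triangleleft);\mathbb Z_2)=0$, then there is an isomorphism of sign assignments from $\epsilon$ to $\epsilon'$, i.e. a map $\eta\colon S\to\mathbb Z_2$ such that $\eta(x)+\epsilon'_{x,y}\equiv\epsilon_{x,y}+\eta(y)\pmod 2$ for all covering pairs $x\,\tilde\triangleleft\,y$.
   Context: In a poset, $x\,\tilde\triangleleft\,y$ ($y$ covers $x$) means $x\triangleleft y$ with no element strictly between. A square consists of $x,y,y',z$ with $y\neq y'$, $x\,\tilde\triangleleft\,y\,\tilde\triangleleft\,z$ and $x\,\tilde\triangleleft\,y'\,\tilde\triangleleft\,z$. A sign assignment assigns $\epsilon_{x,y}\in\mathbb Z_2$ to each covering pair such that $\epsilon_{x,y}+\epsilon_{y,z}\equiv\epsilon_{x,y'}+\epsilon_{y',z}+1\pmod 2$ for every square. $\mathscr K(S,\triangleleft)$ is the CW-complex obtained from the geometric realization of the Hasse graph of $S$ (vertices the elements of $S$, an edge for each covering pair) by attaching a $2$-cell along each square; $\mathrm H^*_{\rm CW}(-;\mathbb Z_2)$ is its cellular cohomology with $\mathbb Z_2$ coefficients. *)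

From HB Require Import structures.
From mathcomp Require Import all_boot all_order all_algebra.
Set Implicit Arguments. Unset Strict Implicit. Unset Printing Implicit Defensive.
Import Order.TTheory GRing.Theory.
Local Open Scope order_scope.

Definition covers (d : Order.disp_t) (S : porderType d) (x y : S) : Prop :=
  x < y /\ ~ (exists w : S, x < w /\ w < y).

Definition is_square (d : Order.disp_t) (S : porderType d) (x y y' z : S) : Prop :=
  y <> y' /\ covers x y /\ covers y z /\ covers x y' /\ covers y' z.

Local Open Scope ring_scope.

(* Sign assignment: epsilon : S -> S -> Z_2, only its values on covering pairs matter. *)
Definition sign_assignment (d : Order.disp_t) (S : porderType d) (eps : S -> S -> 'Z_2) : Prop :=
  forall x y y' z : S, is_square x y y' z ->
    eps x y + eps y z = eps x y' + eps y' z + 1.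

(* Cellular cochain complex of K(S) with Z_2 coefficients:
   C^0 = functions on vertices (elements of S),
   C^1 = functions on edges (covering pairs), represented by S -> S -> 'Z_2,
   C^2 = functions on 2-cells (squares). *)
Definition delta0 (d : Order.disp_t) (S : porderType d) (eta : S -> 'Z_2) : S -> S -> 'Z_2 :=
  fun x y => eta x + eta y.

Definition delta1 (d : Order.disp_t) (S : porderType d) (c : S -> S -> 'Z_2)
  (x y y' z : S) : 'Z_2 :=
  c x y + c y z + c x y' + c y' z.

Definition cocycle1 (d : Order.disp_t) (S : porderType d) (c : S -> S -> 'Z_2) : Prop :=
  forall x y y' z : S, is_square x y y' z -> delta1 c x y y' z = 0.

Definition coboundary1 (d : Order.disp_t) (S : porderType d) (c : S -> S -> 'Z_2) : Prop :=
  exists eta : S -> 'Z_2, forall x y : S, covers x y -> c x y = delta0 eta x y.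

Definition H1_CW_trivial (d : Order.disp_t) (S : porderType d) : Prop :=
  forall c : S -> S -> 'Z_2, cocycle1 c -> coboundary1 c.

(** The difference of two sign assignments violates the square condition
    twice, so it is a 1-cocycle of K(S).  When H^1 vanishes it is the
    coboundary of some eta : S -> Z_2, and over Z_2 the coboundary relation
    eps + eps' = delta0 eta is exactly the isomorphism condition. *)

From mathcomp Require Import all_boot all_order all_algebra.
From mathcomp Require Import ring.
Import Order.TTheory GRing.Theory.
Set Implicit Arguments.
Unset Strict Implicit.
Local Open Scope ring_scope.

Lemma pchar2_Z2 : (2 \in [pchar 'Z_2])%N.
Proof. by []. Qed.

Section SignAssignmentCocycle.

Variables (d : Order.disp_t) (S : porderType d).

Lemma delta1D (c c' : S -> S -> 'Z_2) (x y y' z : S) :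
  delta1 (fun u v => c u v + c' u v) x y y' z = delta1 c x y y' z + delta1 c' x y y' z.
Proof. rewrite /delta1; ring. Qed.

Lemma sign_assignment_delta1 (eps : S -> S -> 'Z_2) (x y y' z : S) :
  sign_assignment eps -> is_square x y y' z -> delta1 eps x y y' z = 1.
Proof.
move=> eps_sign sq; rewrite /delta1 (eps_sign _ _ _ _ sq).
set a := eps x y' + eps y' z.
have -> : a + 1 + eps x y' + eps y' z = a + a + 1 by rewrite /a; ring.
by rewrite (addrr_pchar2 pchar2_Z2) add0r.
Qed.

Lemma sign_assignment_add_cocycle (eps eps' : S -> S -> 'Z_2) :
  sign_assignment eps -> sign_assignment eps' ->
  cocycle1 (fun x y => eps x y + eps' x y).
Proof.
move=> eps_sign eps'_sign x y y' z sq.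
by rewrite delta1D !sign_assignment_delta1 // (addrr_pchar2 pchar2_Z2).
Qed.

End SignAssignmentCocycle.

Theorem proposition3p14 (d : Order.disp_t) (S : porderType d)
  (eps eps' : S -> S -> 'Z_2) :
  sign_assignment eps -> sign_assignment eps' -> H1_CW_trivial S ->
  exists eta : S -> 'Z_2, forall x y : S, covers x y ->
    eta x + eps' x y = eps x y + eta y.
Proof.
move=> eps_sign eps'_sign H1_0.
have [eta eta_cobound] := H1_0 _ (sign_assignment_add_cocycle eps_sign eps'_sign).
exists eta => x y cov_xy.
have /= cob_xy := eta_cobound _ _ cov_xy; rewrite /delta0 in cob_xy.
have eps'E : eps' x y = eps x y + eta x + eta y.
  by rewrite -addrA -cob_xy (addKr_pchar2 pchar2_Z2).
by rewrite eps'E [eps x y + _]addrC -!addrA (addKr_pchar2 pchar2_Z2).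
Qed.
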